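(* A graph $3$-partition $\mathscr{G}=(G_{<},G_{=},G_{>},\sigma)$ with vertex set $L$ can be explained by a relaxed scenario if and only if, for every subset $L'\subseteq L$, the restriction $\mathscr{G}_{|L'}=(G_{<}[L'],G_{=}[L'],G_{>}[L'],\sigma_{|L'})$ can be explained by a relaxed scenario.
   Context: All trees are planted phylogenetic trees: a tree $T$ has a distinguished vertex $0_T$ of degree $1$ whose unique neighbor $\rho_T$ is the root, and every vertex other than $0_T$ and the leaves $L(T)$ has at least two children. For $x,y\in V(T)$ write $y\preceq_T x$ if $x$ lies on the path from $0_T$ to $y$; edges are written $uv$ with $v\prec_T u$. $\mathrm{lca}_T$ denotes the last common ancestor. A time map for $T$ is $\tau_T\colon V(T)\to\mathbb{R}$ with $\tau_T(x)<\tau_T(y)$ whenever $x\prec_T y$. A relaxed scenario $\mathscr{S}=(T,S,\sigma,\mu,\tau_T,\tau_S)$ consists of a gene tree $T$ with time map $\tau_T$, a species tree $S$ with time map $\tau_S$, a map $\sigma\colon L(T)\to M$ with $M\subseteq L(S)$, and a map $\mu\colon V(T)\to V(S)\cup E(S)$ such that (S0) $\mu(x)=0_S$ iff $x=0_T$; (S1) $\mu(x)\in L(S)$ iff $x\in L(T)$, in which case $\mu(x)=\sigma(x)$; (S2) if $\mu(x)\in V(S)$ then $\tau_S(\mu(x))=\tau_T(x)$; (S3) if $\mu(x)=uv\in E(S)$ then $\tau_S(v)<\tau_T(x)<\tau_S(u)$. The graphs $G_{=}(\mathscr{S})$, $G_{<}(\mathscr{S})$, $G_{>}(\mathscr{S})$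 have vertex set $L(T)$, and for distinct $x,y$ the pair $xy$ is an edge of $G_{=}(\mathscr{S})$, $G_{<}(\mathscr{S})$, resp. $G_{>}(\mathscr{S})$ iff $\tau_T(\mathrm{lca}_T(x,y))$ is $=$, $<$, resp. $>$ than $\tau_S(\mathrm{lca}_S(\sigma(x),\sigma(y)))$. A graph $3$-partition $\mathscr{G}=(G_{<},G_{=},G_{>},\sigma)$ is an ordered tuple of three edge-disjoint graphs on a common vertex set $L$ with coloring $\sigma\colon L\to M$ such that every unordered pair of distinct elements of $L$ is an edge of exactly one of them; it is explained by $\mathscr{S}$ (with the same $\sigma$) if $G_{<}=G_{<}(\mathscr{S})$, $G_{=}=G_{=}(\mathscr{S})$, $G_{>}=G_{>}(\mathscr{S})$. $G[L']$ denotes the induced subgraph. *)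

From Stdlib Require Import Reals.
From mathcomp Require Import all_boot.
Set Implicit Arguments. Unset Strict Implicit. Unset Printing Implicit Defensive.

Definition simple_graph (L : finType) (G : rel L) : Prop :=
  (forall x, ~~ G x x) /\ (forall x y, G x y = G y x).

Definition is_g3partition (L : finType) (Glt Geq Ggt : rel L) : Prop :=
  simple_graph Glt /\ simple_graph Geq /\ simple_graph Ggt /\
  forall x y, x != y -> (Glt x y + Geq x y + Ggt x y == 1)%N.

(* A tree is given by its finite vertex type, a parent map and the planted
   vertex 0_T (the unique fixpoint of the parent map). The edges are the
   pairs (par v, v) for v <> 0_T. *)
Record ptree := PTree { vtx : finType; par : vtx -> vtx; zero : vtx }.

Definition children (T : ptree) (v : vtx T) : {set vtx T} :=
  [set w | (par w == v) && (w != zero T)].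

Definition is_leaf (T : ptree) (v : vtx T) : bool :=
  (v != zero T) && (children v == set0).

Definition planted (T : ptree) : Prop :=
  par (zero T) = zero T /\
  (forall v : vtx T, exists k, iter k (@par T) v = zero T) /\
  #|children (zero T)| = 1 /\
  (forall v : vtx T, v != zero T -> ~~ is_leaf v -> 1 < #|children v|).

(* ancb x y  <=>  y lies on the path from 0_T to x, i.e. x <=_T y *)
Definition ancb (T : ptree) (x y : vtx T) : bool :=
  [exists k : 'I_#|vtx T|.+1, iter k (@par T) x == y].

Definition lca (T : ptree) (x y : vtx T) : vtx T :=
  odflt (zero T) [pick z | [&& ancb x z, ancb y z &
                            [forall w, (ancb x w && ancb y w) ==> ancb z w]]].

Definition time_map (T : ptree) (tau : vtx T -> R) : Prop :=
  forall x y : vtx T, ancb x y -> x != y -> Rlt (tau x) (tau y).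

(* Gene tree leaves are identified with L via lfT (a bijection onto L(T));
   colours M are identified with a subset of L(S) via the injection lfS.
   mu x = inl v : x is mapped to the vertex v of S;
   mu x = inr v : x is mapped to the edge (par v, v) of S (v <> 0_S). *)
Definition relaxed_scenario (L M : finType) (sigma : L -> M)
  (T S : ptree) (lfT : L -> vtx T) (lfS : M -> vtx S)
  (mu : vtx T -> (vtx S + vtx S)%type) (tauT : vtx T -> R) (tauS : vtx S -> R)
  : Prop :=
  planted T /\ planted S /\ time_map tauT /\ time_map tauS /\
  injective lfT /\ (forall v, is_leaf v <-> exists l, lfT l = v) /\
  injective lfS /\ (forall m, is_leaf (lfS m)) /\
  (forall x v, mu x = inr v -> v != zero S) /\
  (forall x, mu x = inl (zero S) <-> x = zero T) /\
  (forall x, (exists v, mu x = inl v /\ is_leaf v) <-> is_leaf x) /\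
  (forall l, mu (lfT l) = inl (lfS (sigma l))) /\
  (forall x v, mu x = inl v -> tauT x = tauS v) /\
  (forall x v, mu x = inr v -> Rlt (tauS v) (tauT x) /\ Rlt (tauT x) (tauS (par v))).

Definition explainable (L M : finType) (Glt Geq Ggt : rel L) (sigma : L -> M)
  : Prop :=
  exists (T S : ptree) (lfT : L -> vtx T) (lfS : M -> vtx S)
         (mu : vtx T -> (vtx S + vtx S)%type) (tauT : vtx T -> R)
         (tauS : vtx S -> R),
    relaxed_scenario sigma lfT lfS mu tauT tauS /\
    forall l l' : L,
      let a := tauT (lca (lfT l) (lfT l')) in
      let b := tauS (lca (lfS (sigma l)) (lfS (sigma l'))) in
      (Glt l l' <-> l <> l' /\ Rlt a b) /\
      (Geq l l' <-> l <> l' /\ a = b) /\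
      (Ggt l l' <-> l <> l' /\ Rgt a b).

Definition restr (L : finType) (L' : {set L}) (G : rel L)
  : rel {x : L | x \in L'} := fun x y => G (val x) (val y).

Definition restr_col (L M : finType) (L' : {set L}) (sigma : L -> M)
  : {x : L | x \in L'} -> M := fun x => sigma (val x).

Arguments restr {L} L' G.
Arguments restr_col {L M} L' sigma.

From Stdlib Require Import Reals.
From mathcomp Require Import all_boot zify.
Set Implicit Arguments. Unset Strict Implicit. Unset Printing Implicit Defensive.

(* Only the gene tree has to change when a relaxed scenario is restricted to
   L' ⊆ L. Delete the leaves outside L' one at a time, each time also
   suppressing the parent of the deleted leaf if it is left with a single
   child. This preserves the ancestor relation between the surviving vertices,
   hence the last common ancestors of the surviving leaves; so the species
   tree, mu and both time maps, restricted to the surviving vertices, form a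
   relaxed scenario with the same lca times, which explains the induced
   graphs. The converse is the case L' = L. *)

Notation anc := (fconnect (@par _)).

Lemma ancbE (T : ptree) (x y : vtx T) : ancb x y = anc x y.
Proof.
apply/existsP/idP => [[k /eqP <-]|xy]; first exact: fconnect_iter.
have lt_order : findex (@par _) x y < #|vtx T|.+1.
  by rewrite ltnS ltnW // (leq_trans (findex_max xy)) ?max_card.
by exists (Ordinal lt_order); rewrite iter_findex.
Qed.

Section PlantedTree.
Variable T : ptree.
Hypothesis HT : planted T.
Notation V := (vtx T).
Notation z0 := (zero T).

Lemma par_zero : par z0 = z0. Proof. by case: HT. Qed.

Lemma iter_par_zero k : iter k (@par _) z0 = z0.
Proof. by elim: k => //= k ->; rewrite par_zero. Qed.

Lemma anc_zero (x : V) : anc x z0.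
Proof. by case: HT => _ [/(_ x) [k <-] _]; exact: fconnect_iter. Qed.

Lemma iter_par_card (x : V) : iter #|V| (@par _) x = z0.
Proof.
have xz := anc_zero x.
have le_card : findex (@par _) x z0 <= #|V|.
  by rewrite ltnW // (leq_trans (findex_max xz)) ?max_card.
by rewrite -(subnK le_card) iterD iter_findex // iter_par_zero.
Qed.

Lemma anc_anti (x y : V) : anc x y -> anc y x -> x = y.
Proof.
move=> /iter_findex xy /iter_findex yx.
set a := findex _ x y in xy; set b := findex _ y x in yx.
have cyc n : iter (n * (a + b)) (@par _) x = x.
  by elim: n => // n IH; rewrite mulSn iterD IH addnC iterD xy yx.
case: (posnP (a + b)) => [ab0|ab_gt0]; first by rewrite -xy (_ : a = 0) //; lia.
have x0 : x = z0.
  by rewrite -(cyc #|V|) -(subnK (leq_pmulr #|V| ab_gt0)) iterD iter_par_card iter_par_zero.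
by rewrite -xy x0 iter_par_zero.
Qed.

Lemma anc_child (y w : V) :
  anc y w -> y != w -> exists2 c, c \in children w & anc y c.
Proof.
move=> yw ne; have k_lt := findex_max yw; have := iter_findex yw.
set k := findex _ _ _ in k_lt *; move=> ykw.
have k_gt0 : 0 < k by rewrite lt0n findex_eq0.
have k1_lt : k.-1 < order (@par _) y by rewrite (leq_trans _ k_lt) // prednK.
exists (iter k.-1 (@par _) y); last exact: fconnect_iter.
rewrite inE -iterS prednK // ykw eqxx /=; apply/eqP => cz.
have ck : iter k.-1 (@par _) y = w by rewrite -ykw -[in RHS](prednK k_gt0) iterS cz par_zero.
by move: (findex_iter k1_lt); rewrite ck -/k; lia.
Qed.

Lemma anc_leaf (x y : V) : is_leaf x -> anc y x -> y = x.
Proof.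
move=> /andP [_ /eqP no_child] yx; apply/eqP/negPn/negP => ne.
by have [c] := anc_child yx ne; rewrite no_child inE.
Qed.

Lemma par_neq_leaf (x v : V) : is_leaf x -> par v != x.
Proof.
move=> /andP [xz /eqP no_child]; case: (eqVneq v z0) => [->|vz].
  by rewrite par_zero eq_sym.
apply/eqP => vx; have : v \in children x by rewrite inE vx eqxx.
by rewrite no_child inE.
Qed.

Lemma par_fixed (v : V) : par v = v -> v = z0.
Proof. by move=> pv; rewrite -(iter_par_card v); elim: #|V| => //= n <-. Qed.

Lemma children_zero_unique (a b : V) : a \in children z0 -> b \in children z0 -> a = b.
Proof. by case: HT => _ [_ [/eqP/cards1P [r ->] _]]; rewrite !inE => /eqP -> /eqP ->. Qed.

Definition is_lca (x y w : V) :=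
  [/\ anc x w, anc y w & forall u, anc x u -> anc y u -> anc w u].

Lemma lca_unique (x y w : V) : is_lca x y w -> lca x y = w.
Proof.
move=> [xw yw wmin]; rewrite /lca; case: pickP => /= [w' /and3P [xw' yw' /forallP w'min]|none].
  apply: anc_anti; last by apply: wmin; rewrite -ancbE.
  by move: (w'min w); rewrite !ancbE xw yw.
have := none w; rewrite !ancbE xw yw /=; move/negP; case; apply/forallP => u.
by rewrite !ancbE; apply/implyP => /andP [xu yu]; exact: wmin.
Qed.

Lemma is_lca_lca (x y : V) : is_lca x y (lca x y).
Proof.
have ex : exists i, anc y (iter i (@par _) x).
  by exists #|V|; rewrite iter_par_card anc_zero.
have [i yi imin] := ex_minnP ex.
suff i_lca : is_lca x y (iter i (@par _) x) by rewrite (lca_unique i_lca).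
split => //; first exact: fconnect_iter.
move=> u /iter_findex <- yu; case: (leqP i (findex (@par _) x u)) => [le_iu|lt_ui].
  by rewrite -(subnK le_iu) iterD fconnect_iter.
by have := imin _ yu; lia.
Qed.

End PlantedTree.

Section PruneLeaf.
Variables (T : ptree) (x0 y1 : vtx T).
Hypotheses (HT : planted T) (leaf_x0 : is_leaf x0) (leaf_y1 : is_leaf y1).
Hypothesis y1_neq_x0 : y1 != x0.
Notation V := (vtx T).
Notation z0 := (zero T).
Notation px := (par x0).

(* The leaf x0 is deleted, and so is its parent px when x0 has a single
   sibling; the second leaf y1 only ensures that px is not 0_T. *)
Definition keep (v : V) := (v != x0) && ((v != px) || (2 < #|children px|)).

Lemma x0_neq_zero : x0 != z0. Proof. by case/andP: leaf_x0. Qed.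

Lemma x0_in_children : x0 \in children px.
Proof. by rewrite inE eqxx x0_neq_zero. Qed.

Lemma px_not_leaf : ~~ is_leaf px.
Proof. by rewrite negb_and; apply/orP; right; apply/set0Pn; exists x0; exact: x0_in_children. Qed.

Lemma px_neq_zero : px != z0.
Proof.
apply/eqP => pxz.
have y1z : y1 != z0 by case/andP: leaf_y1.
have [c c_root y1c] := anc_child HT (anc_zero HT y1) y1z.
have cx0 : c = x0 by apply: (children_zero_unique HT) => //; rewrite -pxz x0_in_children.
by rewrite cx0 in y1c; move: y1_neq_x0; rewrite (anc_leaf HT leaf_x0 y1c) eqxx.
Qed.

Lemma par_px_neq : par px != px.
Proof. by apply/eqP => /(par_fixed HT) pxz; move: px_neq_zero; rewrite pxz eqxx. Qed.

Lemma keep_zero : keep z0.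
Proof. by rewrite /keep eq_sym x0_neq_zero eq_sym px_neq_zero. Qed.

Lemma keep_pxE : keep px = (2 < #|children px|).
Proof. by rewrite /keep (par_neq_leaf HT _ leaf_x0) eqxx. Qed.

Lemma keep_par_px : keep (par px).
Proof. by rewrite /keep (par_neq_leaf HT _ leaf_x0) par_px_neq. Qed.

Lemma not_keep_par (v : V) : ~~ keep (par v) -> par v = px.
Proof. by rewrite /keep (par_neq_leaf HT _ leaf_x0) /= negb_or negbK => /andP [/eqP]. Qed.

Lemma keep_sibling (c : V) : c \in children px -> c != x0 -> keep c.
Proof.
rewrite inE /keep => /andP [/eqP cpx _] ->; apply/orP; left.
by apply/eqP => cpx'; move: par_px_neq; rewrite -{1}cpx' cpx eqxx.
Qed.

Lemma exists_sibling : exists2 c, c \in children px & c != x0.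
Proof.
have : 1 < #|children px| by case: HT => _ [_ [_]]; apply; rewrite ?px_neq_zero ?px_not_leaf.
case/card_gt1P => a [b [ca cb ab]].
by case: (eqVneq a x0) => [ax0|]; [exists b; rewrite // -ax0 eq_sym | exists a].
Qed.

Lemma sibling_unique (a b : V) : ~~ keep px ->
  a \in children px -> b \in children px -> a != x0 -> b != x0 -> a = b.
Proof.
rewrite keep_pxE -leqNgt => small ca cb ax0 bx0.
apply/eqP/negPn/negP => ab.
have : 2 < #|children px|.
  by apply/card_gt2P; exists a, b, x0; rewrite ca cb x0_in_children ab bx0 eq_sym ax0.
by rewrite ltnNge small.
Qed.

Definition prune_par (v : V) : V := if keep (par v) then par v else par px.

Lemma keep_prune_par (v : V) : keep (prune_par v).
Proof. by rewrite /prune_par; case: ifP => // _; exact: keep_par_px. Qed.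

Definition prune : ptree :=
  @PTree {v : V | keep v}
    (fun v => exist _ (prune_par (val v)) (keep_prune_par (val v)))
    (exist _ z0 keep_zero).

Lemma anc_prune_par (v : V) : anc v (prune_par v).
Proof.
rewrite /prune_par; case: ifP => [_|/negbT/not_keep_par pv]; first exact: fconnect1.
by rewrite -pv; exact: (fconnect_iter _ 2).
Qed.

Lemma prune_anc_val (u w : vtx prune) : anc u w -> anc (val u) (val w).
Proof.
move=> /iter_findex <-; elim: (findex _ _ _) => [|k IH] /=; first exact: connect0.
exact: connect_trans IH (anc_prune_par _).
Qed.

Lemma val_anc_prune (u w : vtx prune) : anc (val u) (val w) -> anc u w.
Proof.
move=> /iter_findex; move: (findex _ _ _) => k.
elim: k {-2}k (leqnn k) u => [|n IH] [|k] // le_kn u; try by move/val_inj ->.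
rewrite iterSr => ukw; apply: connect_trans (fconnect1 _ u) _.
case: (boolP (keep (par (val u)))) => kp.
  by apply: (IH k) => //; rewrite /= /prune_par kp.
have pu := not_keep_par kp; rewrite pu in ukw kp.
case: k le_kn ukw => [|k] le_kn ukw.
  by move: (valP w); rewrite -ukw (negbTE kp).
by rewrite iterSr in ukw; apply: (IH k); [lia | rewrite /= /prune_par pu (negbTE kp)].
Qed.

Lemma prune_ancE (u w : vtx prune) : anc u w = anc (val u) (val w).
Proof. by apply/idP/idP; [exact: prune_anc_val | exact: val_anc_prune]. Qed.

Lemma prune_childrenE (v w : vtx prune) :
  (w \in children v) = (prune_par (val w) == val v) && (val w != z0).
Proof. by rewrite inE. Qed.

(* The child of val v in T that a child w of v in the pruned tree replaces. *)
Definition prune_rep (w : vtx prune) : V := if keep (par (val w)) then val w else px.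

Lemma prune_rep_child (v w : vtx prune) :
  w \in children v -> prune_rep w \in children (val v) :\ x0.
Proof.
rewrite prune_childrenE /prune_rep /prune_par !inE.
case: ifP => [_ /andP [-> ->]|_ /andP [-> _]].
  by case/andP: (valP w) => ->.
by rewrite (par_neq_leaf HT _ leaf_x0) px_neq_zero.
Qed.

Lemma prune_rep_inj (v : vtx prune) : {in children v &, injective prune_rep}.
Proof.
move=> a b; rewrite !prune_childrenE /prune_rep /prune_par.
have ka := valP a; have kb := valP b.
case: ifP => [_|/negbT nka]; case: ifP => [_|/negbT nkb] /andP [/eqP pa az] /andP [/eqP pb bz].
- exact: val_inj.
- by move=> apx; rewrite apx -(not_keep_par nkb) (negbTE nkb) in ka.
- by move=> pxb; rewrite -pxb -(not_keep_par nka) (negbTE nka) in kb.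
move=> _; apply: val_inj; apply: sibling_unique.
- by rewrite -(not_keep_par nka).
- by rewrite inE (not_keep_par nka) eqxx az.
- by rewrite inE (not_keep_par nkb) eqxx bz.
- by case/andP: ka.
- by case/andP: kb.
Qed.

Lemma prune_rep_onto (v : vtx prune) (w : V) :
  w \in children (val v) :\ x0 -> exists2 w', w' \in children v & prune_rep w' = w.
Proof.
rewrite !inE => /and3P [wx0 /eqP wv wz].
have kpw : keep (par w) by rewrite wv (valP v).
case: (boolP (keep w)) => [kw|nkw].
  exists (exist _ w kw); last by rewrite /prune_rep /= kpw.
  by rewrite prune_childrenE /prune_par /= kpw wv eqxx wz.
have wpx : w = px by move: nkw; rewrite /keep wx0 /= negb_or negbK => /andP [/eqP].
have [c cpx cx0] := exists_sibling; have kc := keep_sibling cpx cx0.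
move: cpx; rewrite inE => /andP [/eqP cpx cz].
have nkpc : ~~ keep (par c) by rewrite cpx -wpx.
exists (exist _ c kc); last by rewrite /prune_rep /= (negbTE nkpc).
by rewrite prune_childrenE /prune_par /= (negbTE nkpc) -wpx wv eqxx cz.
Qed.

Lemma card_prune_children (v : vtx prune) :
  #|children v| = #|children (val v)| - (px == val v).
Proof.
rewrite (cardsD1 x0) inE x0_neq_zero andbT addKn -(card_in_imset (prune_rep_inj (v := v))).
apply: eq_card => w.
apply/imsetP/idP => [[w' cw' ->]|/prune_rep_onto [w' cw' <-]]; first exact: prune_rep_child.
by exists w'.
Qed.

Lemma px_children_gt2 (v : vtx prune) : px = val v -> 2 < #|children px|.
Proof. by move=> pxv; rewrite -keep_pxE pxv (valP v). Qed.

Lemma prune_zeroE (v : vtx prune) : (v == zero prune) = (val v == z0).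
Proof. by rewrite -val_eqE. Qed.

Lemma prune_leafE (v : vtx prune) : is_leaf v = is_leaf (val v).
Proof.
rewrite /is_leaf -!cards_eq0 card_prune_children prune_zeroE.
case: (eqVneq px (val v)) => [pxv|_]; last by rewrite subn0.
by have := px_children_gt2 pxv; rewrite -pxv; case: #|_| => [|[|[|n]]].
Qed.

Lemma prune_planted : planted prune.
Proof.
case: (HT) => _ [_ [root_card branching]]; split; last split; last split.
- by apply: val_inj; rewrite /= /prune_par (par_zero HT) keep_zero.
- move=> v; exists (findex (@par _) v (zero prune)); apply: iter_findex.
  by apply: val_anc_prune; exact: anc_zero.
- by rewrite card_prune_children /= (negbTE px_neq_zero) subn0.
move=> v; rewrite prune_zeroE prune_leafE card_prune_children => vz nleaf.
have := branching _ vz nleaf; case: (eqVneq px (val v)) => [pxv|_]; last by rewrite subn0.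
by have := px_children_gt2 pxv; rewrite -pxv; lia.
Qed.

Lemma keep_leaf (v : V) : is_leaf v -> v != x0 -> keep v.
Proof.
rewrite /keep => lv ->; apply/orP; left.
by apply: contraTneq lv => ->; exact: px_not_leaf.
Qed.

Lemma sibling_above (x : V) : is_leaf x -> x != x0 -> anc x px ->
  exists2 a, a \in children px & (a != x0) && anc x a.
Proof.
move=> lx xx0 xpx; have xpx' : x != px by apply: contraTneq lx => ->; exact: px_not_leaf.
have [a cpa xa] := anc_child HT xpx xpx'; exists a; rewrite // xa andbT.
by apply: contraNneq xx0 => ax0; rewrite -ax0 (anc_leaf HT _ xa) // ax0.
Qed.

Lemma lca_neq_px (x y : V) : ~~ keep px ->
  is_leaf x -> is_leaf y -> x != x0 -> y != x0 -> lca x y != px.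
Proof.
move=> nkpx lx ly xx0 yx0; have [xw yw wmin] := is_lca_lca HT x y.
apply/eqP => wpx; rewrite wpx in xw yw wmin.
have [a cpa /andP [ax0 xa]] := sibling_above lx xx0 xw.
have [b cpb /andP [bx0 yb]] := sibling_above ly yx0 yw.
have ab := sibling_unique nkpx cpa cpb ax0 bx0; rewrite -ab in yb.
move: cpa; rewrite inE => /andP [/eqP pa _].
have apx : a = px by apply: (anc_anti HT); [rewrite -pa fconnect1 | exact: wmin].
by move: par_px_neq; rewrite -{1}apx pa eqxx.
Qed.

Lemma keep_lca (x y : V) : is_leaf x -> is_leaf y -> x != x0 -> y != x0 -> keep (lca x y).
Proof.
move=> lx ly xx0 yx0; rewrite /keep; apply/andP; split.
  have [xw _ _] := is_lca_lca HT x y.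
  by apply: contraNneq xx0 => wx0; rewrite wx0 in xw; rewrite (anc_leaf HT leaf_x0 xw).
case: (boolP (keep px)) => [|nkpx]; first by rewrite keep_pxE => ->; rewrite orbT.
by rewrite lca_neq_px.
Qed.

Lemma prune_lca (x y : vtx prune) : is_leaf (val x) -> is_leaf (val y) ->
  val (lca x y) = lca (val x) (val y).
Proof.
move=> lx ly; have [xx0 _] := andP (valP x); have [yx0 _] := andP (valP y).
pose w : vtx prune := exist _ (lca (val x) (val y)) (keep_lca lx ly xx0 yx0).
suff -> : lca x y = w by [].
apply: (lca_unique prune_planted); have [xw yw wmin] := is_lca_lca HT (val x) (val y).
by split; rewrite ?prune_ancE // => u; rewrite !prune_ancE; exact: wmin.
Qed.

End PruneLeaf.

Section GeneScenario.
Variables (L M : finType) (sigma : L -> M).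
Variables (S : ptree) (lfS : M -> vtx S) (tauS : vtx S -> R).

(* The conditions of a relaxed scenario that involve the gene tree, whose
   leaves are labelled by A; the species tree is fixed. *)
Record gene_scenario (A : {set L}) (T : ptree) (lfT : L -> vtx T)
    (mu : vtx T -> (vtx S + vtx S)%type) (tauT : vtx T -> R) : Prop := GeneScenario {
  gs_planted : planted T;
  gs_time : time_map tauT;
  gs_inj : {in A &, injective lfT};
  gs_leaf : forall v, is_leaf v <-> exists2 l, l \in A & lfT l = v;
  gs_edge : forall x v, mu x = inr v -> v != zero S;
  gs_zero : forall x, mu x = inl (zero S) <-> x = zero T;
  gs_leaf_vertex : forall x, (exists v, mu x = inl v /\ is_leaf v) <-> is_leaf x;
  gs_sigma : forall l, l \in A -> mu (lfT l) = inl (lfS (sigma l));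
  gs_vertex_time : forall x v, mu x = inl v -> tauT x = tauS v;
  gs_edge_time : forall x v, mu x = inr v -> Rlt (tauS v) (tauT x) /\ Rlt (tauT x) (tauS (par v))
}.

Definition lca_time (T : ptree) (tau : vtx T -> R) (I : Type) (lf : I -> vtx T) (l l' : I) : R :=
  tau (lca (lf l) (lf l')).

Lemma gene_scenario_prune (A : {set L}) (T : ptree) (lfT : L -> vtx T) mu tauT (l0 : L) :
  gene_scenario A lfT mu tauT -> l0 \in A -> 1 < #|A| ->
  exists T' (lfT' : L -> vtx T') mu' tauT', gene_scenario (A :\ l0) lfT' mu' tauT' /\
    {in A :\ l0 &, lca_time tauT' lfT' =2 lca_time tauT lfT}.
Proof.
move=> gs l0A /card_gt1P [a [b [aA bA ab]]].
have [l1 l1A l1l0] : exists2 l1, l1 \in A & l1 != l0.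
  by case: (eqVneq a l0) => [al0|]; [exists b; rewrite // -al0 eq_sym | exists a].
have leafA l : l \in A -> is_leaf (lfT l) by move=> lA; apply/(gs_leaf gs); exists l.
have subA l : l \in A :\ l0 -> l \in A := subsetP (subD1set A l0) l.
have y1x0 : lfT l1 != lfT l0 := contra_neq (gs_inj gs l1A l0A) l1l0.
set HT := gs_planted gs; set T' := prune HT (leafA _ l0A) (leafA _ l1A) y1x0.
have keepA l : l \in A :\ l0 -> keep (lfT l0) (lfT l).
  rewrite !inE => /andP [ll0 lA]; apply: (keep_leaf (leafA _ l0A) (leafA _ lA)).
  exact: contra_neq (gs_inj gs lA l0A) ll0.
pose lfT' l : vtx T' := insubd (zero T') (lfT l).
have lfT'E l : l \in A :\ l0 -> val (lfT' l) = lfT l by move/keepA; exact: insubdK.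
exists T', lfT', (fun v => mu (val v)), (fun v => tauT (val v)); split; last first.
  by move=> l l' lA l'A; rewrite /lca_time prune_lca ?lfT'E ?leafA ?subA.
split=> [|x y|l l' lA l'A e|v|x|x|x|l lA|x|x].
- exact: prune_planted.
- rewrite ancbE prune_ancE -ancbE => xy xy'; apply: (gs_time gs) xy _.
  by rewrite val_eqE.
- by apply: (gs_inj gs (subA _ lA) (subA _ l'A)); rewrite -lfT'E // -[lfT l']lfT'E // e.
- rewrite prune_leafE (gs_leaf gs); split => [[l lA lv]|[l lA <-]]; last first.
    by exists l; rewrite ?lfT'E ?subA.
  have ll0 : l != l0 by apply: contraTneq (valP v) => ll0; rewrite -lv ll0 /keep eqxx.
  by exists l; [rewrite !inE ll0 | apply: val_inj; rewrite lfT'E // !inE ll0].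
- exact: gs_edge gs (val x).
- rewrite (gs_zero gs); split => [/eqP|->] //.
  by rewrite -prune_zeroE => /eqP.
- by rewrite prune_leafE; exact: gs_leaf_vertex gs (val x).
- by rewrite lfT'E //; exact: gs_sigma gs _ (subA _ lA).
- exact: gs_vertex_time gs (val x).
- exact: gs_edge_time gs (val x).
Qed.

Lemma gene_scenario_restrict (A B : {set L}) (T : ptree) (lfT : L -> vtx T) mu tauT :
  gene_scenario A lfT mu tauT -> B \subset A -> B != set0 ->
  exists T' (lfT' : L -> vtx T') mu' tauT', gene_scenario B lfT' mu' tauT' /\
    {in B &, lca_time tauT' lfT' =2 lca_time tauT lfT}.
Proof.
move=> + + B0; move: {2}#|A :\: B| (erefl #|A :\: B|) => n.
elim: n A T lfT mu tauT => [|n IH] A T lfT mu tauT AB gs BA.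
  have -> : B = A by apply/eqP; rewrite eqEsubset BA -setD_eq0 -cards_eq0 AB.
  by exists T, lfT, mu, tauT.
have [l0] : exists l0, l0 \in A :\: B by apply/set0Pn; rewrite -cards_eq0 AB.
rewrite inE => /andP [l0B l0A]; have [b bB] := set0Pn _ B0.
have A_gt1 : 1 < #|A|.
  apply/card_gt1P; exists l0, b; split; rewrite ?l0A ?(subsetP BA) //.
  by apply: contraNneq l0B => ->.
have [T' [lfT' [mu' [tauT' [gs' eq']]]]] := gene_scenario_prune gs l0A A_gt1.
have BA' : B \subset A :\ l0.
  by apply/subsetP => l lB; rewrite !inE (subsetP BA) // andbT; apply: contraNneq l0B => <-.
have AB' : #|(A :\ l0) :\: B| = n.
  have := cardsD1 l0 (A :\: B); rewrite AB inE l0B l0A setDDl setUC -setDDl.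
  by move=> [].
have [T'' [lfT'' [mu'' [tauT'' [gs'' eq'']]]]] := IH _ _ _ _ _ AB' gs' BA'.
exists T'', lfT'', mu'', tauT''; split => // l l' lB l'B.
by rewrite eq'' // eq' // (subsetP BA').
Qed.

End GeneScenario.

Lemma gene_scenario_comp (L L1 M : finType) (sigma : L -> M) (S : ptree) (lfS : M -> vtx S)
    (tauS : vtx S -> R) (f : L1 -> L) (A1 : {set L1}) (A : {set L}) (T : ptree)
    (lfT : L -> vtx T) mu tauT :
  {in A1 &, injective f} -> f @: A1 = A ->
  gene_scenario sigma lfS tauS A lfT mu tauT ->
  gene_scenario (sigma \o f) lfS tauS A1 (lfT \o f) mu tauT.
Proof.
move=> finj fA [HT tT iT lT eS zS lvS sgS vtS etS].
have fA1 x : x \in A1 -> f x \in A by move=> xA1; rewrite -fA imset_f.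
split=> // [x y xA yA|v|x xA]; last exact: sgS (fA1 _ xA).
  by move/(iT _ _ (fA1 _ xA) (fA1 _ yA)); exact: finj.
rewrite lT; split => [[l]|[x xA <-]]; last by exists (f x); rewrite ?fA1.
by rewrite -fA => /imsetP [x xA ->] <-; exists x.
Qed.

Definition graphs_explained (I : finType) (Glt Geq Ggt : rel I) (A : {set I})
    (t s : I -> I -> R) : Prop :=
  {in A &, forall l l',
    (Glt l l' <-> l <> l' /\ Rlt (t l l') (s l l')) /\
    (Geq l l' <-> l <> l' /\ t l l' = s l l') /\
    (Ggt l l' <-> l <> l' /\ Rgt (t l l') (s l l'))}.

Lemma graphs_explained_sub (I : finType) (Glt Geq Ggt : rel I) (A B : {set I})
    (t t' s : I -> I -> R) :
  B \subset A -> {in B &, t' =2 t} ->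
  graphs_explained Glt Geq Ggt A t s -> graphs_explained Glt Geq Ggt B t' s.
Proof.
by move=> BA tt' ge l l' lB l'B; rewrite tt' //; exact: ge (subsetP BA _ lB) (subsetP BA _ l'B).
Qed.

Lemma graphs_explained_comp (I I1 : finType) (f : I1 -> I) (Glt Geq Ggt : rel I)
    (A1 : {set I1}) (A : {set I}) (t s : I -> I -> R) :
  {in A1 &, injective f} -> {in A1, forall x, f x \in A} ->
  graphs_explained Glt Geq Ggt A t s ->
  graphs_explained (fun x y => Glt (f x) (f y)) (fun x y => Geq (f x) (f y))
    (fun x y => Ggt (f x) (f y)) A1 (fun x y => t (f x) (f y)) (fun x y => s (f x) (f y)).
Proof.
move=> finj fA ge x y xA yA.
have fxy : f x <> f y <-> x <> y by split=> [nf e|ne /(finj _ _ xA yA)]; [apply: nf; rewrite e|].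
by rewrite -fxy; exact: ge (fA _ xA) (fA _ yA).
Qed.

Definition explained_on (I M : finType) (Glt Geq Ggt : rel I) (sigma : I -> M)
    (A : {set I}) (S : ptree) (lfS : M -> vtx S) (tauS : vtx S -> R) : Prop :=
  exists (T : ptree) (lfT : I -> vtx T) mu tauT,
    gene_scenario sigma lfS tauS A lfT mu tauT /\
    graphs_explained Glt Geq Ggt A (lca_time tauT lfT) (lca_time tauS (lfS \o sigma)).

Lemma explained_on_sub (I M : finType) (Glt Geq Ggt : rel I) (sigma : I -> M)
    (A B : {set I}) (S : ptree) (lfS : M -> vtx S) (tauS : vtx S -> R) :
  explained_on Glt Geq Ggt sigma A lfS tauS -> B \subset A -> B != set0 ->
  explained_on Glt Geq Ggt sigma B lfS tauS.
Proof.
move=> [T [lfT [mu [tauT [gs ge]]]]] BA B0.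
have [T' [lfT' [mu' [tauT' [gs' eq']]]]] := gene_scenario_restrict gs BA B0.
by exists T', lfT', mu', tauT'; split => //; exact: graphs_explained_sub ge.
Qed.

Lemma explained_on_comp (I I1 M : finType) (f : I1 -> I) (Glt Geq Ggt : rel I)
    (sigma : I -> M) (A1 : {set I1}) (A : {set I}) (S : ptree) (lfS : M -> vtx S)
    (tauS : vtx S -> R) :
  {in A1 &, injective f} -> f @: A1 = A ->
  explained_on Glt Geq Ggt sigma A lfS tauS ->
  explained_on (fun x y => Glt (f x) (f y)) (fun x y => Geq (f x) (f y))
    (fun x y => Ggt (f x) (f y)) (sigma \o f) A1 lfS tauS.
Proof.
move=> finj fA [T [lfT [mu [tauT [gs ge]]]]].
exists T, (lfT \o f), mu, tauT; split; first exact: gene_scenario_comp gs.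
by apply: graphs_explained_comp ge => // x xA1; rewrite -fA imset_f.
Qed.

Definition species_scenario (M : finType) (S : ptree) (lfS : M -> vtx S) (tauS : vtx S -> R) :=
  planted S /\ time_map tauS /\ injective lfS /\ forall m, is_leaf (lfS m).

Lemma explainableE (L M : finType) (Glt Geq Ggt : rel L) (sigma : L -> M) :
  explainable Glt Geq Ggt sigma <->
  exists S (lfS : M -> vtx S) tauS,
    species_scenario lfS tauS /\ explained_on Glt Geq Ggt sigma [set: L] lfS tauS.
Proof.
split.
  move=> [T [S [lfT [lfS [mu [tauT [tauS [rs ge]]]]]]]].
  have [HT [HS [tT [tS [iT [lT [iS [lS [eS [zS [lvS [sgS [vtS etS]]]]]]]]]]]]] := rs.
  exists S, lfS, tauS; split => //; exists T, lfT, mu, tauT; split => [|l l' _ _]; last exact: ge.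
  split=> // [x y _ _|v]; first exact: iT.
  by rewrite lT; split => [[l <-]|[l _ <-]]; exists l.
move=> [S [lfS [tauS [[HS [tS [iS lS]]] [T [lfT [mu [tauT [gs ge]]]]]]]]].
have [HT tT iT lT eS zS lvS sgS vtS etS] := gs.
exists T, S, lfT, lfS, mu, tauT, tauS; split => [|l l']; last exact: ge (in_setT l) (in_setT l').
do 4 split => //; split; first by move=> x y; exact: iT.
split; first by move=> v; rewrite lT; split => [[l _ <-]|[l <-]]; exists l.
do 5 split => //; split => // l; exact: sgS (in_setT l).
Qed.

Theorem corollary6 (L M : finType) (Glt Geq Ggt : rel L) (sigma : L -> M) :
  is_g3partition Glt Geq Ggt ->
  [set: L] != set0 ->
  explainable Glt Geq Ggt sigma <->
  (forall L' : {set L}, L' != set0 ->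
     explainable (restr L' Glt) (restr L' Geq) (restr L' Ggt) (restr_col L' sigma)).
Proof.
(* The equivalence holds for any triple of relations, partition or not. *)
move=> _ L0; split.
  move=> /explainableE [S [lfS [tauS [spec expl]]]] L' L'0.
  apply/explainableE; exists S, lfS, tauS; split => //.
  apply: explained_on_comp (explained_on_sub expl (subsetT L') L'0).
    exact: in2W val_inj.
  apply/setP => l; apply/imsetP/idP => [[x _ ->]|lL']; [exact: valP | by exists (exist _ l lL')].
move=> /(_ _ L0) /explainableE [S [lfS [tauS [spec expl]]]].
apply/explainableE; exists S, lfS, tauS; split => //.
apply: (explained_on_comp (f := fun l => exist _ l (in_setT l))) expl.
  by move=> l l' _ _ [].
apply/setP => x; rewrite !inE; apply/imsetP; exists (val x) => //; exact: val_inj.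
Qed.
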